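(* Let $T,R,K>0$, $I\ge2$, and let the data $a_i,b_i,c_i,f_i\in W^{1,\infty}([0,T]\times[0,R]\times[0,K])$, $\alpha_i\in W^{1,\infty}([0,T]\times[0,K],\mathbb{R}_+)$, $r\in W^{1,\infty}([0,T]\times[0,K],\mathbb{R}_+)$, $\phi\in W^{1,\infty}([0,T]\times[0,K])$, $\psi$, $g$ satisfy the assumptions listed in the context (in particular $a_i\ge\underline{a}>0$, $\alpha_i\ge\underline{\alpha}>0$, $r\ge0$). Let $u,v\in\mathfrak{C}^{1,2,0}_{\{0\}}(\Omega_T)$ where $u$ is a super solution and $v$ a sub solution, i.e. for all $i$: $$\partial_tu_i-a_i\partial_x^2u_i+b_i\partial_xu_i+c_iu_i-f_i\ge0\ (\text{resp. for }v:\le 0)\ \text{on }(0,T)\times(0,R)\times(0,K),$$ $$\partial_lu(t,0,l)+\sum_{i=1}^I\alpha_i(t,l)\partial_xu_i(t,0,l)-r(t,l)u(t,0,l)-\phi(t,l)\le0\ (\text{resp. for }v:\ge0),\quad (t,l)\in(0,T)\times(0,K),$$ $$\partial_xu_i(t,R,l)\ge0\ (\text{resp. for }v:\le0),\quad (t,l)\in(0,T)\times(0,K).$$ Assume moreover that $u_i(0,x,l)\ge v_i(0,x,l)$ and $u_i(t,x,K)\ge v_i(t,x,K)$ for all $i\in\{1,\dots,I\}$, $t\in[0,T]$, $x\in[0,R]$, $l\in[0,K]$. Then $u_i(t,x,l)\ge v_i(t,x,l)$ for all $i$ and all $(t,x,l)\in[0,T]\times[0,R]\times[0,K]$.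
   Context: $\mathcal{N}_R$ is the star network of $I$ copies of $[0,R]$ glued at $0$; a function on $[0,T]\times\mathcal{N}_R\times[0,K]$ is a family $(h_i)_{i=1}^I$, $h_i:[0,T]\times[0,R]\times[0,K]\to\mathbb{R}$, with $h_i(t,0,l)=h_j(t,0,l)=:h(t,0,l)$. $\Omega_T=(0,T)\times\mathring{\mathcal{N}}_R\times(0,K)$. The class $\mathfrak{C}^{1,2,0}_{\{0\}}(\Omega_T)$ consists of such families that are continuous at the junction, with each $h_i$ continuous on $[0,T]\times[0,R]\times[0,K]$ and continuously differentiable in $x$ on $[0,T]\times[0,R]\times[0,K)$, of class $\mathcal{C}^{1,2,0}$ (one continuous $t$-derivative, two continuous $x$-derivatives) on $(0,T)\times(0,R)\times(0,K)$ with $\partial_th_i,\partial_x^2h_i$ bounded there, with $(t,l)\mapsto h(t,0,l)$ in $\mathcal{C}^{0,1}([0,T]\times[0,K))$ (continuously differentiable in $l$), and with each $h_i$ having a generalized $l$-derivative in $\bigcap_{q\in(1,\infty)}L^q$. Standing assumption on the data (called $(\mathcal{H})$ in the paper): $a_i\ge\underline{a}>0$, $\alpha_i\ge\underline{\alpha}>0$; $\psi$ continuous on $[0,T]\times\mathcal{N}_R$, $\mathcal{C}^{0,1}$ on each closed ray and $\mathcal{C}^{1,2}$ inside; $g=(g_i)$ Lipschitz, continuous at the junction, twice differentiable in $x$, with $l\mapsto g(0,l)$ differentiable; compatibility: $\partial_lg(0,l)+\sum_i\alpha_i(0,l)\partial_xg_i(0,l)-r(0,l)g(0,l)=\phi(0,l)$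 for $l\in[0,K)$, $\partial_xg_i(R,l)=0$ for $l\in[0,K)$, $g_i(x,K)=\psi_i(0,x)$. *)

From HB Require Import structures.
From mathcomp Require Import all_boot all_order all_algebra.
From mathcomp Require Import all_classical all_reals all_analysis.
Set Implicit Arguments. Unset Strict Implicit. Unset Printing Implicit Defensive.
Import Order.TTheory GRing.Theory Num.Theory.
Local Open Scope classical_set_scope.
Local Open Scope ring_scope.

(* f has derivative d at x relative to D (D will always be an interval with
   nonempty interior containing x). *)
Definition has_deriv_within {R : realType} (D : set R) (f : R -> R) (x d : R) : Prop :=
  forall e : R, 0 < e -> exists2 del : R, 0 < del &
    forall y, D y -> `|y - x| < del -> `|f y - f x - d * (y - x)| <= e * `|y - x|.

Definition itv_cc {R : realType} (a b : R) : set R := [set y | a <= y <= b].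
Definition itv_oo {R : realType} (a b : R) : set R := [set y | a < y < b].
Definition itv_co {R : realType} (a b : R) : set R := [set y | a <= y < b].

Definition cont_on3 {R : realType} (D : R -> R -> R -> Prop) (f : R -> R -> R -> R) : Prop :=
  forall t x l, D t x l -> forall e : R, 0 < e -> exists2 del : R, 0 < del &
    forall t' x' l', D t' x' l' -> `|t' - t| < del -> `|x' - x| < del -> `|l' - l| < del ->
      `|f t' x' l' - f t x l| < e.

Definition cont_on2 {R : realType} (D : R -> R -> Prop) (f : R -> R -> R) : Prop :=
  forall t l, D t l -> forall e : R, 0 < e -> exists2 del : R, 0 < del &
    forall t' l', D t' l' -> `|t' - t| < del -> `|l' - l| < del -> `|f t' l' - f t l| < e.

(* W^{1,oo} on a (convex, bounded) box = Lipschitz continuous functions *)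
Definition lipschitz3 {R : realType} (D : R -> R -> R -> Prop) (f : R -> R -> R -> R) : Prop :=
  exists L : R, forall t x l t' x' l', D t x l -> D t' x' l' ->
    `|f t' x' l' - f t x l| <= L * (`|t' - t| + `|x' - x| + `|l' - l|).

Definition lipschitz2 {R : realType} (D : R -> R -> Prop) (f : R -> R -> R) : Prop :=
  exists L : R, forall t l t' l', D t l -> D t' l' ->
    `|f t' l' - f t l| <= L * (`|t' - t| + `|l' - l|).

Definition box_cc {R : realType} (T Rad K : R) (t x l : R) : Prop :=
  itv_cc 0 T t /\ itv_cc 0 Rad x /\ itv_cc 0 K l.
Definition box_ccco {R : realType} (T Rad K : R) (t x l : R) : Prop :=
  itv_cc 0 T t /\ itv_cc 0 Rad x /\ itv_co 0 K l.
Definition box_oo {R : realType} (T Rad K : R) (t x l : R) : Prop :=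
  itv_oo 0 T t /\ itv_oo 0 Rad x /\ itv_oo 0 K l.
Definition rect_cc {R : realType} (T K : R) (t l : R) : Prop := itv_cc 0 T t /\ itv_cc 0 K l.
Definition rect_co {R : realType} (T K : R) (t l : R) : Prop := itv_cc 0 T t /\ itv_co 0 K l.

Definition partial3 {R : realType} (k : nat) (f : R -> R -> R -> R) : R -> R -> R -> R :=
  fun t x l => match k with
               | 0%N => derive1 (fun s => f s x l) t
               | 1%N => derive1 (fun y => f t y l) x
               | _ => derive1 (fun m => f t x m) l
               end.

Definition derivable3 {R : realType} (k : nat) (f : R -> R -> R -> R) (t x l : R) : Prop :=
  match k with
  | 0%N => derivable (fun s => f s x l) t 1
  | 1%N => derivable (fun y => f t y l) x 1
  | _ => derivable (fun m => f t x m) l 1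
  end.

Definition smooth3 {R : realType} (phi : R -> R -> R -> R) : Prop :=
  forall s : seq nat, let g := foldr partial3 phi s in
    (forall k t x l, derivable3 k g t x l) /\ cont_on3 (fun _ _ _ => True) g.

Definition test_fun {R : realType} (T Rad K : R) (phi : R -> R -> R -> R) : Prop :=
  smooth3 phi /\ exists2 d : R, 0 < d & forall t x l,
    ~ (d <= t <= T - d /\ d <= x <= Rad - d /\ d <= l <= K - d) -> phi t x l = 0.

Definition mu3 {R : realType} :=
  ((@lebesgue_measure R \x @lebesgue_measure R) \x @lebesgue_measure R)%E.

Definition unc3 {R : realType} (f : R -> R -> R -> R) : (R * R) * R -> R :=
  fun p => f p.1.1 p.1.2 p.2.

Definition Omega3 {R : realType} (T Rad K : R) : set ((R * R) * R) :=
  [set p | box_oo T Rad K p.1.1 p.1.2 p.2].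

Definition weak_dl {R : realType} (T Rad K : R) (h w : R -> R -> R -> R) : Prop :=
  forall phi, test_fun T Rad K phi ->
    (\int[mu3]_(p in Omega3 T Rad K) (unc3 h p * unc3 (partial3 2 phi) p)%:E
     = - \int[mu3]_(p in Omega3 T Rad K) (unc3 w p * unc3 phi p)%:E)%E.

Definition in_all_Lq {R : realType} (T Rad K : R) (w : R -> R -> R -> R) : Prop :=
  forall q : R, 1 < q ->
    measurable_fun (Omega3 T Rad K) (unc3 w) /\
    (\int[mu3]_(p in Omega3 T Rad K) (powR `|unc3 w p| q)%:E < +oo)%E.

(* ---------- the class C^{1,2,0}_{0}(Omega_T) of families (h_i)_{i<I},
   with the (unique) derivatives given explicitly:
   ht = d_t h, hx = d_x h, hxx = d_x^2 h, hl = d_l of (t,l) |-> h(t,0,l).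
   Indices i range over {0,...,I-1} (0-based). *)
Definition C120 {R : realType} (I : nat) (T Rad K : R)
    (h ht hx hxx : nat -> R -> R -> R -> R) (hl : R -> R -> R) : Prop :=
  (forall i j t l, (i < I)%N -> (j < I)%N -> rect_cc T K t l -> h i t 0 l = h j t 0 l) /\
  (forall i, (i < I)%N -> cont_on3 (box_cc T Rad K) (h i)) /\
  (forall i, (i < I)%N ->
     (forall t x l, box_ccco T Rad K t x l ->
        has_deriv_within (itv_cc 0 Rad) (fun y => h i t y l) x (hx i t x l)) /\
     cont_on3 (box_ccco T Rad K) (hx i)) /\
  (forall i, (i < I)%N ->
     (forall t x l, box_oo T Rad K t x l ->
        has_deriv_within (itv_oo 0 T) (fun s => h i s x l) t (ht i t x l) /\
        has_deriv_within (itv_oo 0 Rad) (fun y => hx i t y l) x (hxx i t x l)) /\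
     cont_on3 (box_oo T Rad K) (h i) /\
     cont_on3 (box_oo T Rad K) (ht i) /\
     cont_on3 (box_oo T Rad K) (hx i) /\
     cont_on3 (box_oo T Rad K) (hxx i) /\
     (exists M : R, forall t x l, box_oo T Rad K t x l ->
        `|ht i t x l| <= M /\ `|hxx i t x l| <= M)) /\
  (cont_on2 (rect_co T K) (fun t l => h 0%N t 0 l) /\
   (forall t l, rect_co T K t l ->
      has_deriv_within (itv_co 0 K) (fun m => h 0%N t 0 m) l (hl t l)) /\
   cont_on2 (rect_co T K) hl) /\
  (forall i, (i < I)%N -> exists w, weak_dl T Rad K (h i) w /\ in_all_Lq T Rad K w).

Definition psi_assump {R : realType} (I : nat) (T Rad : R) (psi : nat -> R -> R -> R) : Prop :=
  (forall i j t, (i < I)%N -> (j < I)%N -> itv_cc 0 T t -> psi i t 0 = psi j t 0) /\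
  forall i, (i < I)%N -> exists psit psix psixx : R -> R -> R,
    [/\ cont_on2 (rect_cc T Rad) (psi i),
        forall t x, rect_cc T Rad t x ->
          has_deriv_within (itv_cc 0 Rad) (fun y => psi i t y) x (psix t x),
        cont_on2 (rect_cc T Rad) psix,
        forall t x, itv_oo 0 T t -> itv_oo 0 Rad x ->
          has_deriv_within (itv_oo 0 T) (fun s => psi i s x) t (psit t x) /\
          has_deriv_within (itv_oo 0 Rad) (fun y => psix t y) x (psixx t x) &
        cont_on2 (fun t x => itv_oo 0 T t /\ itv_oo 0 Rad x) psit /\
        cont_on2 (fun t x => itv_oo 0 T t /\ itv_oo 0 Rad x) psixx].

Definition g_assump {R : realType} (I : nat) (T Rad K : R)
    (alpha : nat -> R -> R -> R) (r phi : R -> R -> R)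
    (psi g : nat -> R -> R -> R) : Prop :=
  (forall i, (i < I)%N -> lipschitz2 (rect_cc Rad K) (g i)) /\
  (forall i j l, (i < I)%N -> (j < I)%N -> itv_cc 0 K l -> g i 0 l = g j 0 l) /\
  exists (gx gxx : nat -> R -> R -> R) (gl : R -> R),
    [/\ forall i x l, (i < I)%N -> rect_cc Rad K x l ->
          has_deriv_within (itv_cc 0 Rad) (fun y => g i y l) x (gx i x l) /\
          has_deriv_within (itv_cc 0 Rad) (fun y => gx i y l) x (gxx i x l),
        forall l, itv_cc 0 K l -> has_deriv_within (itv_cc 0 K) (fun m => g 0%N 0 m) l (gl l),
        forall l, itv_co 0 K l ->
          gl l + \sum_(i < I) alpha i 0 l * gx i 0 l - r 0 l * g 0%N 0 l = phi 0 l,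
        forall i l, (i < I)%N -> itv_co 0 K l -> gx i Rad l = 0 &
        forall i x, (i < I)%N -> itv_cc 0 Rad x -> g i x K = psi i 0 x].

Definition data_assump {R : realType} (I : nat) (T Rad K : R)
    (a b c f : nat -> R -> R -> R -> R) (alpha : nat -> R -> R -> R)
    (r phi : R -> R -> R) (psi g : nat -> R -> R -> R) (abar alphabar : R) : Prop :=
  (forall i, (i < I)%N ->
     [/\ lipschitz3 (box_cc T Rad K) (a i), lipschitz3 (box_cc T Rad K) (b i),
         lipschitz3 (box_cc T Rad K) (c i) & lipschitz3 (box_cc T Rad K) (f i)]) /\
  (forall i, (i < I)%N -> lipschitz2 (rect_cc T K) (alpha i)) /\
  (lipschitz2 (rect_cc T K) r /\ lipschitz2 (rect_cc T K) phi) /\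
  (0 < abar /\ (forall i t x l, (i < I)%N -> box_cc T Rad K t x l -> abar <= a i t x l)) /\
  (0 < alphabar /\ (forall i t l, (i < I)%N -> rect_cc T K t l -> alphabar <= alpha i t l)) /\
  (forall i t l, (i < I)%N -> rect_cc T K t l -> 0 <= alpha i t l) /\
  (forall t l, rect_cc T K t l -> 0 <= r t l) /\
  psi_assump I T Rad psi /\
  g_assump I T Rad K alpha r phi psi g.

(** Maximum principle by penalization. Fix λ above 2a + 2R|b| + |c| on the box and
    ε > 0, and let z_i = e^{-λt} (v_i - u_i) - ε (K + 1 - l + x²). Over all branches i
    and a box [0, t0] x [0, R] x [l0, K] with t0 < T, 0 < l0, some z_i attains the
    maximum. A positive maximum is impossible: not at t = 0 or l = K by the ordering of
    the data, not at x = R where the Neumann conditions and the penalty make the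
    x-derivative negative, not at the junction where the one-sided x-derivatives of all
    branches and the l-derivative contradict the junction inequalities (made strict by
    the penalty), and not inside a ray by the first and second derivative tests against
    the equations. Letting ε -> 0 gives v <= u for 0 < t < T, 0 < l < K, and continuity
    extends this to the closed box. *)

From HB Require Import structures.
From mathcomp Require Import all_boot all_order all_algebra.
From mathcomp Require Import all_classical all_reals all_analysis.
From mathcomp Require Import ring lra.
Import Order.TTheory GRing.Theory Num.Theory numFieldNormedType.Exports.
Local Open Scope ring_scope.

Set Implicit Arguments.
Unset Strict Implicit.
Unset Printing Implicit Defensive.

Section HasDerivWithin.
Variable R : realType.
Implicit Types (D : set R) (f g w : R -> R) (a b x d eta : R).

Lemma exists_pos_lt_min (a b : R) : 0 < a -> 0 < b ->
  exists h, [/\ 0 < h, h < a & h < b].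
Proof.
move=> a_gt0 b_gt0; exists (Num.min a b / 2).
have : Num.min a b <= a by rewrite ge_min lexx.
have : Num.min a b <= b by rewrite ge_min lexx orbT.
have : 0 < Num.min a b by rewrite lt_min a_gt0 b_gt0.
by split; lra.
Qed.

Lemma has_deriv_withinD D f g x df dg :
  has_deriv_within D f x df -> has_deriv_within D g x dg ->
  has_deriv_within D (fun y => f y + g y) x (df + dg).
Proof.
move=> fd gd e e_gt0.
have [d1 d1_gt0 f_near] := fd (e / 2) (divr_gt0 e_gt0 (ltr0Sn _ 1)).
have [d2 d2_gt0 g_near] := gd (e / 2) (divr_gt0 e_gt0 (ltr0Sn _ 1)).
exists (Num.min d1 d2) => [|y Dy]; first by rewrite lt_min d1_gt0 d2_gt0.
rewrite lt_min => /andP[yd1 yd2].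
have := f_near y Dy yd1; have := g_near y Dy yd2.
have -> : f y + g y - (f x + g x) - (df + dg) * (y - x)
    = (f y - f x - df * (y - x)) + (g y - g x - dg * (y - x)) by ring.
move: (ler_normD (f y - f x - df * (y - x)) (g y - g x - dg * (y - x))); lra.
Qed.

Lemma has_deriv_withinZ D f x k df :
  has_deriv_within D f x df -> has_deriv_within D (fun y => k * f y) x (k * df).
Proof.
move=> fd e e_gt0.
have k1_gt0 : 0 < `|k| + 1 by rewrite ltr_wpDl.
have [d d_gt0 f_near] := fd (e / (`|k| + 1)) (divr_gt0 e_gt0 k1_gt0).
exists d => // y Dy yd.
have -> : k * f y - k * f x - k * df * (y - x) = k * (f y - f x - df * (y - x)) by ring.
rewrite normrM; apply: le_trans (ler_wpM2l (normr_ge0 k) (f_near y Dy yd)) _.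
by rewrite mulrA ler_wpM2r // mulrCA ler_piMr ?ltW // ltr_pdivrMr // mul1r ltrDl.
Qed.

Lemma has_deriv_withinB D f g x df dg :
  has_deriv_within D f x df -> has_deriv_within D g x dg ->
  has_deriv_within D (fun y => f y - g y) x (df - dg).
Proof.
move=> fd gd.
have -> : (fun y => f y - g y) = (fun y => f y + -1 * g y) by apply: funext => y; ring.
by rewrite -[- dg]mulN1r; apply: has_deriv_withinD => //; apply: has_deriv_withinZ.
Qed.

Lemma has_deriv_within_cst D k x : has_deriv_within D (fun=> k) x 0.
Proof.
move=> e e_gt0; exists 1 => // y _ _.
by rewrite subrr mul0r subrr normr0 mulr_ge0 // ltW.
Qed.

Lemma has_deriv_within_id D x : has_deriv_within D id x 1.
Proof.
move=> e e_gt0; exists 1 => // y _ _.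
by rewrite mul1r subrr normr0 mulr_ge0 // ltW.
Qed.

Lemma has_deriv_within_sqr D x : has_deriv_within D (fun y => y ^+ 2) x (2 * x).
Proof.
move=> e e_gt0; exists e => // y _ yx.
have -> : y ^+ 2 - x ^+ 2 - 2 * x * (y - x) = (y - x) * (y - x) by ring.
by rewrite normrM ler_wpM2r // ltW.
Qed.

Lemma has_deriv_within_subset D D' f x d :
  (D' `<=` D)%classic -> has_deriv_within D f x d -> has_deriv_within D' f x d.
Proof.
move=> D'D fd e e_gt0; have [del del_gt0 f_near] := fd e e_gt0.
by exists del => // y /D'D; exact: f_near.
Qed.

Lemma has_deriv_within_le0_at_right_max D f x d eta : 0 < eta ->
    (forall y, x < y < x + eta -> D y) -> (forall y, x < y < x + eta -> f y <= f x) ->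
  has_deriv_within D f x d -> d <= 0.
Proof.
move=> eta_gt0 D_right f_right fd; rewrite leNgt; apply/negP => d_gt0.
have [del del_gt0 f_near] := fd (d / 2) (divr_gt0 d_gt0 (ltr0Sn _ 1)).
have [h [h_gt0 h_del h_eta]] := exists_pos_lt_min del_gt0 eta_gt0.
have xh : x < x + h < x + eta by apply/andP; split; lra.
have yx : x + h - x = h by ring.
have := f_near _ (D_right _ xh); rewrite yx gtr0_norm // ler_norml => /(_ h_del) /andP[+ _].
move: (f_right _ xh) (mulr_gt0 d_gt0 h_gt0); lra.
Qed.

Lemma has_deriv_within_ge0_at_left_max D f x d eta : 0 < eta ->
    (forall y, x - eta < y < x -> D y) -> (forall y, x - eta < y < x -> f y <= f x) ->
  has_deriv_within D f x d -> 0 <= d.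
Proof.
move=> eta_gt0 D_left f_left fd; rewrite leNgt; apply/negP => d_lt0.
have nd_gt0 : 0 < - d by rewrite oppr_gt0.
have [del del_gt0 f_near] := fd (- d / 2) (divr_gt0 nd_gt0 (ltr0Sn _ 1)).
have [h [h_gt0 h_del h_eta]] := exists_pos_lt_min del_gt0 eta_gt0.
have xh : x - eta < x - h < x by apply/andP; split; lra.
have yx : x - h - x = - h by ring.
have := f_near _ (D_left _ xh); rewrite yx normrN gtr0_norm // ler_norml.
move=> /(_ h_del) /andP[+ _].
move: (f_left _ xh) (mulr_gt0 nd_gt0 h_gt0); lra.
Qed.

Lemma is_derive_has_deriv_within D f x d :
  is_derive x 1 f d -> has_deriv_within D f x d.
Proof.
move=> [fx <-] e e_gt0.
have /cvgrPdist_le /(_ e e_gt0) /nbhs_ballP [del del_gt0 near_x] := fx.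
exists del => // y _ yx.
have [->|y_neq] := eqVneq y x; first by rewrite !subrr !(mulr0, normr0, subr0).
have yx_neq0 : y - x != 0 by rewrite subr_eq0.
have yx_ball : ball 0 del (y - x) by rewrite /ball /= sub0r normrN.
have := near_x (y - x) yx_ball yx_neq0.
rewrite /= [_%:A]mulr1 subrK => H.
have -> : f y - f x - 'D_1 f x * (y - x)
    = - ((y - x) * ('D_1 f x - (y - x)^-1 * (f y - f x))) by field.
by rewrite normrN normrM mulrC ler_wpM2r.
Qed.

Lemma has_deriv_within_itv_oo_is_derive a b f x d : a < x < b ->
  has_deriv_within (itv_oo a b) f x d -> is_derive x 1 f d.
Proof.
move=> /andP[ax xb] fd.
have eta_gt0 : 0 < Num.min (x - a) (b - x) by rewrite lt_min !subr_gt0 ax xb.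
have near_in y : `|y - x| < Num.min (x - a) (b - x) -> itv_oo a b y.
  rewrite lt_min !ltr_norml => /andP[/andP[h1 h2] /andP[h3 h4]].
  by rewrite /itv_oo /=; apply/andP; split; lra.
have dfx : ((fun h : R => h^-1 *: ((f \o shift x) (h *: 1) - f x)) @ 0^' --> d)%classic.
  apply/cvgrPdist_le => e e_gt0; have [del del_gt0 f_near] := fd e e_gt0.
  apply/nbhs_ballP; exists (Num.min (Num.min (x - a) (b - x)) del).
    by rewrite /= lt_min eta_gt0 del_gt0.
  move=> h; rewrite /ball /= sub0r normrN lt_min => /andP[h_eta h_del] h_neq0.
  rewrite [_ *: 1]mulr1.
  have hx_eta : `|h + x - x| < Num.min (x - a) (b - x) by rewrite addrK.
  have hx_del : `|h + x - x| < del by rewrite addrK.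
  have := f_near (h + x) (near_in _ hx_eta) hx_del.
  rewrite addrK => H.
  have -> : d - h^-1 *: (f (h + x) - f x) = - (h^-1 * (f (h + x) - f x - d * h)).
    by rewrite /GRing.scale /=; field.
  by rewrite normrN normrM normfV ler_pdivrMl ?normr_gt0 // [`|h| * e]mulrC.
have fx : derivable f x 1 by apply/cvgP: dfx.
by apply: (DeriveDef fx); exact: cvg_lim.
Qed.

Lemma has_deriv_within_expM a b w t dw lam : a < t < b ->
  has_deriv_within (itv_oo a b) w t dw ->
  has_deriv_within (itv_oo a b) (fun s => expR (- lam * s) * w s) t
    (expR (- lam * t) * (dw - lam * w t)).
Proof.
move=> tab wd.
have lin : is_derive t 1 (fun s => - lam * s) (- lam).
  apply: has_deriv_within_itv_oo_is_derive tab _.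
  by have := has_deriv_withinZ (- lam) (has_deriv_within_id (itv_oo a b) t); rewrite mulr1.
have := is_deriveM (is_derive1_comp (is_derive_expR _) lin)
  (has_deriv_within_itv_oo_is_derive tab wd).
move=> /(is_derive_has_deriv_within (itv_oo a b)).
by rewrite /GRing.scale /=; congr has_deriv_within; ring.
Qed.

Lemma has_deriv_within_interior_max a b g g1 x d2 : a < x < b ->
    (forall y, a < y < b -> has_deriv_within (itv_oo a b) g y (g1 y)) ->
    has_deriv_within (itv_oo a b) g1 x d2 ->
  (forall y, a < y < b -> g y <= g x) -> g1 x = 0 /\ d2 <= 0.
Proof.
move=> xab gd g1d gmax; have /andP[ax xb] := xab.
have g_deriv y : a < y < b -> is_derive y 1 g (g1 y).
  by move=> yab; exact: has_deriv_within_itv_oo_is_derive yab (gd y yab).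
have g1x0 : g1 x = 0.
  case: (g_deriv x xab) => _ <-.
  have g_derivable y : y \in `]a, b[ -> derivable g y 1 by rewrite in_itv => /g_deriv [].
  have g_max y : y \in `]a, b[ -> g y <= g x by rewrite in_itv => /gmax.
  have xI : x \in `]a, b[ by rewrite in_itv /= ax xb.
  by case: (derive1_at_max (ltW (lt_trans ax xb)) g_derivable xI g_max).
split => //; rewrite leNgt; apply/negP => d2_gt0.
have [del del_gt0 g1_near] := g1d (d2 / 2) (divr_gt0 d2_gt0 (ltr0Sn _ 1)).
have bx_gt0 : 0 < b - x by rewrite subr_gt0.
have [h [h_gt0 h_del h_b]] := exists_pos_lt_min del_gt0 bx_gt0.
have in_ab c : x <= c <= x + h -> a < c < b by move=> /andP[xc ch]; apply/andP; split; lra.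
have g1_pos c : c \in `]x, x + h[ -> 0 < g1 c.
  rewrite in_itv /= => /andP[xc ch].
  have cx_gt0 : 0 < c - x by rewrite subr_gt0.
  have cx_del : `|c - x| < del by rewrite gtr0_norm //; lra.
  have c_ab : itv_oo a b c by apply: in_ab; rewrite !ltW.
  have := g1_near c c_ab cx_del.
  rewrite g1x0 (gtr0_norm cx_gt0) ler_norml => /andP[+ _].
  by move: (mulr_gt0 d2_gt0 cx_gt0); lra.
have g_deriv_xh c : c \in `]x, x + h[ -> is_derive c 1 g (g1 c).
  by rewrite in_itv /= => /andP[xc ch]; apply: g_deriv; apply: in_ab; rewrite !ltW.
have g_cont : {within `[x, x + h], continuous g}%classic.
  apply: continuous_in_subspaceT => c; rewrite inE /= in_itv /= => /in_ab /g_deriv [].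
  by move=> /derivable1_diffP /differentiable_continuous.
have xxh : x < x + h by rewrite ltrDl.
have [c cI g_incr] := MVT xxh g_deriv_xh g_cont.
have xh_ab : a < x + h < b by apply: in_ab; rewrite lexx ltW.
have hxx : x + h - x = h by ring.
move: (mulr_gt0 (g1_pos c cI) h_gt0); rewrite -hxx -g_incr.
by move: (gmax _ xh_ab); lra.
Qed.

End HasDerivWithin.

Section Boxes.
Variable R : realType.
Implicit Types (T Rad K t x l : R).

Definition cbox (t1 t2 x1 x2 l1 l2 : R) : set ((R * R) * R) :=
  [set p | [/\ t1 <= p.1.1 <= t2, x1 <= p.1.2 <= x2 & l1 <= p.2 <= l2]].

Lemma cbox_compact t1 t2 x1 x2 l1 l2 : compact (cbox t1 t2 x1 x2 l1 l2).
Proof.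
have -> : cbox t1 t2 x1 x2 l1 l2 = (`[t1, t2] `*` `[x1, x2] `*` `[l1, l2])%classic.
  apply/funext => p; apply/propext; rewrite /cbox /= !in_itv /=.
  by split; [case=> -> -> -> | case=> [[-> ->] ->]].
by apply: compact_setX; [apply: compact_setX|]; exact: segment_compact.
Qed.

Lemma continuous_max_cbox (F : (R * R) * R -> R) t1 t2 x1 x2 l1 l2 :
    t1 <= t2 -> x1 <= x2 -> l1 <= l2 ->
    {within cbox t1 t2 x1 x2 l1 l2, continuous F}%classic ->
  exists2 p, cbox t1 t2 x1 x2 l1 l2 p &
    forall q, cbox t1 t2 x1 x2 l1 l2 q -> F q <= F p.
Proof.
move=> t12 x12 l12 F_cont.
have box_neq0 : (cbox t1 t2 x1 x2 l1 l2 !=set0)%classic.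
  by exists ((t1, x1), l1); rewrite /cbox /= !lexx t12 x12 l12.
have [p p_in p_max] := compact_EVT_max box_neq0 (@cbox_compact t1 t2 x1 x2 l1 l2) F_cont.
by exists p => [|q q_in]; [rewrite -inE | apply: p_max; rewrite inE].
Qed.

Lemma cont_on3_within (D : R -> R -> R -> Prop) (f : R -> R -> R -> R)
    (A : set ((R * R) * R)) :
    (forall p, A p -> D p.1.1 p.1.2 p.2) -> cont_on3 D f ->
  {within A, continuous (unc3 f)}%classic.
Proof.
move=> AD f_cont; apply/subspace_continuousP => p Ap.
apply/cvgrPdist_lt => e e_gt0.
have [del del_gt0 f_near] := f_cont _ _ _ (AD p Ap) e e_gt0.
apply/nbhs_ballP; exists del => //= q [[q1 q2] q3] Aq.
rewrite /unc3 distrC.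
by apply: f_near; rewrite 1?distrC //; exact: AD.
Qed.

Lemma continuous_penalized (A : set ((R * R) * R)) (w1 w2 : (R * R) * R -> R)
    (lam eps K : R) :
    {within A, continuous w1}%classic -> {within A, continuous w2}%classic ->
  {within A, continuous (fun p => expR (- lam * p.1.1) * (w1 p - w2 p)
                                  - eps * (K + 1 - p.2 + p.1.2 ^+ 2))}%classic.
Proof.
move=> w1_cont w2_cont.
have t_cont : {within A, continuous (fun p : (R * R) * R => p.1.1)}%classic.
  by apply: continuous_subspaceT => p; apply: continuous_comp; [exact: cvg_fst|exact: cvg_fst].
have x_cont : {within A, continuous (fun p : (R * R) * R => p.1.2)}%classic.
  by apply: continuous_subspaceT => p; apply: continuous_comp; [exact: cvg_fst|exact: cvg_snd].
have l_cont : {within A, continuous (fun p : (R * R) * R => p.2)}%classic.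
  by apply: continuous_subspaceT => p; exact: cvg_snd.
have -> : (fun p => expR (- lam * p.1.1) * (w1 p - w2 p) - eps * (K + 1 - p.2 + p.1.2 ^+ 2))
    = (expR \o (fun p => - lam * p.1.1)) \* (w1 - w2) - (fun=> eps) \*
      ((fun=> K + 1) - (fun p => p.2) + (fun p => p.1.2) \* (fun p => p.1.2)).
  by apply/funext => p; rewrite /= expr2.
move=> p; apply: continuousB; apply: continuousM.
- apply: continuous_comp; last exact: continuous_expR.
  by apply: continuousM; [exact: cst_continuous | exact: t_cont].
- by apply: continuousB; [exact: w1_cont | exact: w2_cont].
- exact: cst_continuous.
- apply: continuousD; first by apply: continuousB; [exact: cst_continuous | exact: l_cont].
  by apply: continuousM; exact: x_cont.
Qed.

Lemma exists_itv_oo_near T t del : 0 < T -> 0 <= t <= T -> 0 < del ->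
  exists2 t', 0 < t' < T & `|t' - t| < del.
Proof.
move=> T_gt0 /andP[t_ge0 tT] del_gt0.
have T2_gt0 : 0 < T / 2 by rewrite divr_gt0.
have [h [h_gt0 h_del h_T]] := exists_pos_lt_min del_gt0 T2_gt0.
have [t_small|t_large] := ltP t (T / 2).
  exists (t + h); first by apply/andP; split; lra.
  have -> : t + h - t = h by ring.
  by rewrite gtr0_norm.
exists (t - h); first by apply/andP; split; lra.
have -> : t - h - t = - h by ring.
by rewrite normrN gtr0_norm.
Qed.

Lemma cont_on3_le_from_interior T Rad K (u v : R -> R -> R -> R) :
    0 < T -> 0 < K -> cont_on3 (box_cc T Rad K) u -> cont_on3 (box_cc T Rad K) v ->
    (forall t x l, 0 < t < T -> 0 <= x <= Rad -> 0 < l < K -> v t x l <= u t x l) ->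
  forall t x l, box_cc T Rad K t x l -> v t x l <= u t x l.
Proof.
move=> T_gt0 K_gt0 u_cont v_cont vu t x l p_in.
rewrite leNgt; apply/negP => uv.
have gap_gt0 : 0 < (v t x l - u t x l) / 2 by rewrite divr_gt0 // subr_gt0.
have [du du_gt0 u_near] := u_cont t x l p_in _ gap_gt0.
have [dv dv_gt0 v_near] := v_cont t x l p_in _ gap_gt0.
have [h [h_gt0 h_du h_dv]] := exists_pos_lt_min du_gt0 dv_gt0.
case: p_in => t_in [x_in l_in].
have [t' t'_in t't] := exists_itv_oo_near T_gt0 t_in h_gt0.
have [l' l'_in l'l] := exists_itv_oo_near K_gt0 l_in h_gt0.
have p'_in : box_cc T Rad K t' x l'.
  by move: t'_in l'_in => /andP[? ?] /andP[? ?]; split; [|split] => //; apply/andP; split; lra.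
have xx_du : `|x - x| < du by rewrite subrr normr0.
have xx_dv : `|x - x| < dv by rewrite subrr normr0.
have := u_near t' x l' p'_in (lt_trans t't h_du) xx_du (lt_trans l'l h_du).
have := v_near t' x l' p'_in (lt_trans t't h_dv) xx_dv (lt_trans l'l h_dv).
rewrite !ltr_norml => /andP[? ?] /andP[? ?].
by move: (vu t' x l' t'_in x_in l'_in); lra.
Qed.

End Boxes.

Section FiniteFamilies.
Variable R : realType.

Lemma finite_argmax (X : Type) (A : X -> Prop) (F : nat -> X -> R) (n : nat) : (0 < n)%N ->
    (forall i, (i < n)%N -> exists2 p, A p & forall q, A q -> F i q <= F i p) ->
  exists i p, [/\ (i < n)%N, A p & forall j q, (j < n)%N -> A q -> F j q <= F i p].
Proof.
elim: n => // n IH _ Fmax.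
have [p Ap p_max] := Fmax n (ltnSn n).
have [n0|n_gt0] := posnP n.
  subst n; exists 0%N, p; split => // j q.
  by rewrite ltnS leqn0 => /eqP ->; exact: p_max.
have [|i [p' [i_lt Ap' p'_max]]] := IH n_gt0.
  by move=> i i_lt; apply: Fmax; rewrite ltnS ltnW.
have [le_p'p|lt_pp'] := leP (F i p') (F n p).
  exists n, p; split => // j q; rewrite ltnS leq_eqVlt => /orP[/eqP -> | j_lt] Aq.
    exact: p_max.
  exact: le_trans (p'_max j q j_lt Aq) le_p'p.
exists i, p'; split => //; first by rewrite ltnS ltnW.
move=> j q; rewrite ltnS leq_eqVlt => /orP[/eqP -> | j_lt] Aq; last exact: p'_max.
exact: le_trans (p_max q Aq) (ltW lt_pp').
Qed.

Lemma bounded_family (D : R -> R -> R -> Prop) (h : nat -> R -> R -> R -> R) (n : nat) :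
    (forall i, (i < n)%N -> exists C, forall t x l, D t x l -> `|h i t x l| <= C) ->
  exists C, forall i t x l, (i < n)%N -> D t x l -> `|h i t x l| <= C.
Proof.
elim: n => [|n IH] h_bd; first by exists 0.
have [|C C_bd] := IH; first by move=> i i_lt; apply: h_bd; rewrite ltnS ltnW.
have [C' C'_bd] := h_bd n (ltnSn n).
exists (Num.max C C') => i t x l; rewrite ltnS leq_eqVlt => /orP[/eqP -> | i_lt] Dp.
  by rewrite le_max C'_bd ?orbT.
by rewrite le_max C_bd.
Qed.

Lemma lipschitz3_box_bounded (T Rad K : R) (f : R -> R -> R -> R) :
    0 <= T -> 0 <= Rad -> 0 <= K -> lipschitz3 (box_cc T Rad K) f ->
  exists C, forall t x l, box_cc T Rad K t x l -> `|f t x l| <= C.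
Proof.
move=> T_ge0 Rad_ge0 K_ge0 [L f_lip].
have o_in : box_cc T Rad K 0 0 0 by rewrite /box_cc /itv_cc /= !lexx T_ge0 Rad_ge0 K_ge0.
exists (`|f 0 0 0| + `|L| * (T + Rad + K)) => t x l p_in.
have := f_lip _ _ _ _ _ _ o_in p_in; rewrite !subr0 => f_near.
move: p_in => [/andP[t0 tT] [/andP[x0 xR] /andP[l0 lK]]].
have L_bd : L * (`|t| + `|x| + `|l|) <= `|L| * (T + Rad + K).
  apply: le_trans (ler_norm _) _.
  by rewrite normrM ler_wpM2l // !ger0_norm ?addr_ge0 //; lra.
have := ler_normD (f t x l - f 0 0 0) (f 0 0 0); rewrite subrK.
by move: f_near L_bd; lra.
Qed.

End FiniteFamilies.

Section C120Facts.
Variables (R : realType) (I : nat) (T Rad K : R).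
Variables (h ht hx hxx : nat -> R -> R -> R -> R) (hl : R -> R -> R).
Hypothesis hC : C120 I T Rad K h ht hx hxx hl.

Lemma C120_junction i j t l : (i < I)%N -> (j < I)%N -> rect_cc T K t l ->
  h i t 0 l = h j t 0 l.
Proof. by case: hC => junction _; exact: junction. Qed.

Lemma C120_cont i : (i < I)%N -> cont_on3 (box_cc T Rad K) (h i).
Proof. by case: hC => _ [cont _]; exact: cont. Qed.

Lemma C120_deriv_x i t x l : (i < I)%N -> box_ccco T Rad K t x l ->
  has_deriv_within (itv_cc 0 Rad) (fun y => h i t y l) x (hx i t x l).
Proof. by move=> iI p; case: hC => _ [_ [/(_ i iI) [/(_ t x l p) ? _] _]]. Qed.

Lemma C120_deriv_t i t x l : (i < I)%N -> box_oo T Rad K t x l ->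
  has_deriv_within (itv_oo 0 T) (fun s => h i s x l) t (ht i t x l).
Proof. by move=> iI p; case: hC => _ [_ [_ [/(_ i iI) [/(_ t x l p) []]]]]. Qed.

Lemma C120_deriv_xx i t x l : (i < I)%N -> box_oo T Rad K t x l ->
  has_deriv_within (itv_oo 0 Rad) (fun y => hx i t y l) x (hxx i t x l).
Proof. by move=> iI p; case: hC => _ [_ [_ [/(_ i iI) [/(_ t x l p) []]]]]. Qed.

Lemma C120_deriv_l t l : rect_co T K t l ->
  has_deriv_within (itv_co 0 K) (fun m => h 0%N t 0 m) l (hl t l).
Proof. by case: hC => _ [_ [_ [_ [[_ [dl _]] _]]]]; exact: dl. Qed.

End C120Facts.

(* [W], [Wt], [Wx], [Wxx] stand for e^{-λt} (v - u) and e^{-λt} times the derivatives of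
   [v - u] at a positive interior maximum of the penalized gap. *)
Lemma interior_max_inconsistent (R : realType) (W Wt Wx Wxx A B C lam eps x Rad : R) :
    Wt - A * Wxx + B * Wx + C * W <= 0 -> lam * W <= Wt ->
    Wx = eps * (2 * x) -> Wxx <= eps * 2 -> 0 <= x <= Rad -> 0 < eps < W -> 0 <= A ->
  2 * A + 2 * Rad * `|B| + `|C| < lam -> False.
Proof.
move=> pde Wt_ge Wx_eq Wxx_le /andP[x_ge0 xR] /andP[eps_gt0 epsW] A_ge0 lam_gt.
have W_gt0 : 0 < W by apply: lt_trans epsW.
have diffusion : A * Wxx <= A * (eps * 2) := ler_wpM2l A_ge0 Wxx_le.
have drift : - (`|B| * (eps * (2 * Rad))) <= B * Wx.
  have : `|B * Wx| <= `|B| * (eps * (2 * Rad)).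
    have Wx_ge0 : 0 <= eps * (2 * x) by apply: mulr_ge0; lra.
    have x_Rad : 2 * x <= 2 * Rad by lra.
    have eps_x_Rad := ler_wpM2l (ltW eps_gt0) x_Rad.
    by rewrite normrM Wx_eq (ger0_norm Wx_ge0); exact: (ler_wpM2l (normr_ge0 B) eps_x_Rad).
  by rewrite ler_norml => /andP[].
have reaction : - (`|C| * W) <= C * W.
  have : `|C * W| <= `|C| * W by rewrite normrM (gtr0_norm W_gt0).
  by rewrite ler_norml => /andP[].
have eps_W : (2 * A + 2 * Rad * `|B|) * eps <= (2 * A + 2 * Rad * `|B|) * W.
  have Rad_B : 0 <= Rad * `|B| by apply: mulr_ge0 => //; lra.
  have coef_ge0 : 0 <= 2 * A + 2 * Rad * `|B| by lra.
  have eps_le_W := ltW epsW.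
  exact: (ler_wpM2l coef_ge0 eps_le_W).
have : (2 * A + 2 * Rad * `|B| + `|C|) * W < lam * W by rewrite ltr_pM2r.
lra.
Qed.

(* The penalty -ε(K + 1 - l) makes the junction inequality strict and -εx² the Neumann
   one; the weight e^{-λt} absorbs the lower order terms of the equation. *)
Definition penalized_gap (R : realType) (lam eps K : R) (u v : nat -> R -> R -> R -> R)
    (i : nat) (t x l : R) : R :=
  expR (- lam * t) * (v i t x l - u i t x l) - eps * (K + 1 - l + x ^+ 2).

Definition family_max_at (R : realType) (I : nat) (Rad K t0 l0 : R)
    (z : nat -> R -> R -> R -> R) (i : nat) (t x l : R) : Prop :=
  forall j s y m, (j < I)%N -> 0 <= s <= t0 -> 0 <= y <= Rad -> l0 <= m <= K ->
    z j s y m <= z i t x l.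

Ltac solve_itv := rewrite /itv_cc /itv_co /itv_oo /=; apply/andP; split; lra.

Section Comparison.
Variable R : realType.
Variables (I : nat) (T Rad K : R).
Variables (a b c f : nat -> R -> R -> R -> R) (alpha : nat -> R -> R -> R).
Variables (r phi : R -> R -> R).
Variables (u ut ux uxx v vt vx vxx : nat -> R -> R -> R -> R) (ul vl : R -> R -> R).
Implicit Types (t x l dv du : R) (D : set R).
Hypotheses (I_gt0 : (0 < I)%N) (T_gt0 : 0 < T) (Rad_gt0 : 0 < Rad).
Hypotheses (u_C120 : C120 I T Rad K u ut ux uxx ul) (v_C120 : C120 I T Rad K v vt vx vxx vl).
Hypothesis a_ge0 : forall i t x l, (i < I)%N -> box_cc T Rad K t x l -> 0 <= a i t x l.
Hypothesis alpha_ge0 : forall i t l, (i < I)%N -> rect_cc T K t l -> 0 <= alpha i t l.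
Hypothesis r_ge0 : forall t l, rect_cc T K t l -> 0 <= r t l.
Hypothesis u_super : forall i t x l, (i < I)%N -> box_oo T Rad K t x l ->
  0 <= ut i t x l - a i t x l * uxx i t x l + b i t x l * ux i t x l
       + c i t x l * u i t x l - f i t x l.
Hypothesis u_junction : forall t l, itv_oo 0 T t -> itv_oo 0 K l ->
  ul t l + \sum_(i < I) alpha i t l * ux i t 0 l - r t l * u 0%N t 0 l - phi t l <= 0.
Hypothesis u_neumann : forall i t l, (i < I)%N -> itv_oo 0 T t -> itv_oo 0 K l ->
  0 <= ux i t Rad l.
Hypothesis v_sub : forall i t x l, (i < I)%N -> box_oo T Rad K t x l ->
  vt i t x l - a i t x l * vxx i t x l + b i t x l * vx i t x l
  + c i t x l * v i t x l - f i t x l <= 0.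
Hypothesis v_junction : forall t l, itv_oo 0 T t -> itv_oo 0 K l ->
  0 <= vl t l + \sum_(i < I) alpha i t l * vx i t 0 l - r t l * v 0%N t 0 l - phi t l.
Hypothesis v_neumann : forall i t l, (i < I)%N -> itv_oo 0 T t -> itv_oo 0 K l ->
  vx i t Rad l <= 0.
Hypothesis vu_initial : forall i x l, (i < I)%N -> itv_cc 0 Rad x -> itv_cc 0 K l ->
  v i 0 x l <= u i 0 x l.
Hypothesis vu_terminal : forall i t x, (i < I)%N -> itv_cc 0 T t -> itv_cc 0 Rad x ->
  v i t x K <= u i t x K.

Variable lam : R.
Hypothesis lam_large : forall i t x l, (i < I)%N -> box_cc T Rad K t x l ->
  2 * a i t x l + 2 * Rad * `|b i t x l| + `|c i t x l| < lam.

Section Penalization.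
Variable eps : R.
Hypothesis eps_gt0 : 0 < eps.

Local Notation z := (penalized_gap lam eps K u v).
Local Notation gap_max_at t0 l0 := (family_max_at I Rad K t0 l0 z).

Lemma penalized_gap_le0_of_le i t x l : l <= K -> v i t x l <= u i t x l ->
  z i t x l <= 0.
Proof.
move=> lK vu; rewrite /penalized_gap.
have : expR (- lam * t) * (v i t x l - u i t x l) <= 0.
  by rewrite pmulr_rle0 ?expR_gt0 // subr_le0.
have : 0 <= eps * (K + 1 - l + x ^+ 2).
  by apply: mulr_ge0; [exact: ltW | move: (sqr_ge0 x); lra].
lra.
Qed.

Lemma eps_lt_weighted_gap i t x l : l <= K -> 0 < z i t x l ->
  eps < expR (- lam * t) * (v i t x l - u i t x l).
Proof.
move=> lK; rewrite /penalized_gap.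
have : eps <= eps * (K + 1 - l + x ^+ 2).
  by apply: ler_peMr; [exact: ltW | move: (sqr_ge0 x); lra].
lra.
Qed.

Lemma penalized_gap_junction i t l : (i < I)%N -> rect_cc T K t l ->
  z i t 0 l = z 0 t 0 l.
Proof.
move=> iI tl.
by rewrite /penalized_gap (C120_junction u_C120 iI I_gt0 tl) (C120_junction v_C120 iI I_gt0 tl).
Qed.

Lemma penalized_gap_deriv_x D i t x l dv du :
    has_deriv_within D (fun y => v i t y l) x dv ->
    has_deriv_within D (fun y => u i t y l) x du ->
  has_deriv_within D (fun y => z i t y l) x
    (expR (- lam * t) * (dv - du) - eps * (2 * x)).
Proof.
move=> vd ud.
have := has_deriv_withinB (has_deriv_withinZ (expR (- lam * t)) (has_deriv_withinB vd ud))
  (has_deriv_withinZ eps (has_deriv_withinD (has_deriv_within_cst D (K + 1 - l) x)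
                                            (has_deriv_within_sqr D x))).
by rewrite add0r.
Qed.

Lemma penalized_gap_deriv_xx D i t x l (dvx dux : R) :
    has_deriv_within D (fun y => vx i t y l) x dvx ->
    has_deriv_within D (fun y => ux i t y l) x dux ->
  has_deriv_within D (fun y => expR (- lam * t) * (vx i t y l - ux i t y l) - eps * (2 * y)) x
    (expR (- lam * t) * (dvx - dux) - eps * 2).
Proof.
move=> vd ud.
have := has_deriv_withinB (has_deriv_withinZ (expR (- lam * t)) (has_deriv_withinB vd ud))
  (has_deriv_withinZ eps (has_deriv_withinZ 2 (has_deriv_within_id D x))).
by rewrite mulr1.
Qed.

Lemma penalized_gap_deriv_l D i t x l dv du :
    has_deriv_within D (fun m => v i t x m) l dv ->
    has_deriv_within D (fun m => u i t x m) l du ->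
  has_deriv_within D (fun m => z i t x m) l
    (expR (- lam * t) * (dv - du) + eps).
Proof.
move=> vd ud.
have := has_deriv_withinB (has_deriv_withinZ (expR (- lam * t)) (has_deriv_withinB vd ud))
  (has_deriv_withinZ eps (has_deriv_withinD
     (has_deriv_withinB (has_deriv_within_cst D (K + 1) l) (has_deriv_within_id D l))
     (has_deriv_within_cst D (x ^+ 2) l))).
by rewrite sub0r addr0 mulrN1 opprK.
Qed.

Lemma penalized_gap_deriv_t i t x l dv du : 0 < t < T ->
    has_deriv_within (itv_oo 0 T) (fun s => v i s x l) t dv ->
    has_deriv_within (itv_oo 0 T) (fun s => u i s x l) t du ->
  has_deriv_within (itv_oo 0 T) (fun s => z i s x l) t
    (expR (- lam * t) * (dv - du - lam * (v i t x l - u i t x l))).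
Proof.
move=> tT vd ud.
have := has_deriv_withinB (has_deriv_within_expM lam tT (has_deriv_withinB vd ud))
  (has_deriv_within_cst (itv_oo 0 T) (eps * (K + 1 - l + x ^+ 2)) t).
by rewrite subr0.
Qed.

Lemma gap_max_junction_le0 (t0 l0 : R) t l : t0 < T -> 0 < l0 -> 0 < t <= t0 -> l0 <= l < K ->
  gap_max_at t0 l0 0 t 0 l -> z 0 t 0 l <= 0.
Proof.
move=> t0T l0_gt0 /andP[t_gt0 tt0] /andP[l0l lK] gmax.
rewrite leNgt; apply/negP => gap_pos.
set E := expR (- lam * t).
have E_gt0 : 0 < E by exact: expR_gt0.
have Rad_ge0 : 0 <= Rad := ltW Rad_gt0.
have t_oo : itv_oo 0 T t by solve_itv.
have l_oo : itv_oo 0 K l by solve_itv.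
have tl_cc : rect_cc T K t l by split; solve_itv.
have t_in : 0 <= t <= t0 by solve_itv.
have vx_le j : (j < I)%N -> vx j t 0 l <= ux j t 0 l.
  move=> jI; have p_in : box_ccco T Rad K t 0 l by do 2?split; solve_itv.
  suff : E * (vx j t 0 l - ux j t 0 l) - eps * (2 * 0) <= 0.
    by rewrite mulr0 mulr0 subr0 pmulr_rle0 // subr_le0.
  apply: (has_deriv_within_le0_at_right_max Rad_gt0) (penalized_gap_deriv_x
    (C120_deriv_x v_C120 jI p_in) (C120_deriv_x u_C120 jI p_in)) => y /andP[y_gt0 yR].
    by solve_itv.
  by rewrite (penalized_gap_junction jI tl_cc); apply: gmax => //; solve_itv.
have vl_lt : vl t l < ul t l.
  have tl_co : rect_co T K t l by split; solve_itv.
  suff : E * (vl t l - ul t l) + eps <= 0.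
    by rewrite -subr_lt0 -(pmulr_rlt0 _ E_gt0); move: eps_gt0; lra.
  have Kl_gt0 : 0 < K - l by rewrite subr_gt0.
  apply: (has_deriv_within_le0_at_right_max Kl_gt0) (penalized_gap_deriv_l
    (C120_deriv_l v_C120 tl_co) (C120_deriv_l u_C120 tl_co)) => m /andP[lm mK].
    by solve_itv.
  by apply: gmax => //; solve_itv.
have sum_le : \sum_(j < I) alpha j t l * vx j t 0 l <= \sum_(j < I) alpha j t l * ux j t 0 l.
  apply: ler_sum => j _; have jI := ltn_ord j.
  exact: (ler_wpM2l (alpha_ge0 jI tl_cc) (vx_le j jI)).
have r_gap : r t l * u 0%N t 0 l <= r t l * v 0%N t 0 l.
  have : 0 < E * (v 0%N t 0 l - u 0%N t 0 l).
    by apply: lt_trans (eps_lt_weighted_gap (ltW lK) gap_pos).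
  rewrite pmulr_rgt0 // subr_gt0 => /ltW uv.
  exact: (ler_wpM2l (r_ge0 tl_cc) uv).
move: (u_junction t_oo l_oo) (v_junction t_oo l_oo) sum_le r_gap vl_lt.
move: (\sum_(j < I) alpha j t l * vx j t 0 l) (\sum_(j < I) alpha j t l * ux j t 0 l).
by move=> Sv Su; lra.
Qed.

Lemma gap_max_not_neumann (t0 l0 : R) i t l : (i < I)%N -> t0 < T -> 0 < l0 ->
  0 < t <= t0 -> l0 <= l < K -> ~ gap_max_at t0 l0 i t Rad l.
Proof.
move=> iI t0T l0_gt0 /andP[t_gt0 tt0] /andP[l0l lK] gmax.
have Rad_ge0 : 0 <= Rad := ltW Rad_gt0.
have t_oo : itv_oo 0 T t by solve_itv.
have l_oo : itv_oo 0 K l by solve_itv.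
have p_in : box_ccco T Rad K t Rad l by do 2?split; solve_itv.
have : 0 <= expR (- lam * t) * (vx i t Rad l - ux i t Rad l) - eps * (2 * Rad).
  apply: (has_deriv_within_ge0_at_left_max Rad_gt0) (penalized_gap_deriv_x
    (C120_deriv_x v_C120 iI p_in) (C120_deriv_x u_C120 iI p_in)) => y /andP[y_gt0 yR].
    by solve_itv.
  by apply: gmax => //; solve_itv.
have : expR (- lam * t) * (vx i t Rad l - ux i t Rad l) <= 0.
  rewrite pmulr_rle0 ?expR_gt0 // subr_le0.
  exact: le_trans (v_neumann iI t_oo l_oo) (u_neumann iI t_oo l_oo).
have : 0 < eps * (2 * Rad) by rewrite mulr_gt0 // mulr_gt0.
lra.
Qed.

Lemma gap_max_interior_le0 (t0 l0 : R) i t x l : (i < I)%N -> t0 < T -> 0 < l0 ->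
  0 < t <= t0 -> 0 < x < Rad -> l0 <= l < K ->
  gap_max_at t0 l0 i t x l -> z i t x l <= 0.
Proof.
move=> iI t0T l0_gt0 /andP[t_gt0 tt0] xR /andP[l0l lK] gmax.
rewrite leNgt; apply/negP => gap_pos.
set E := expR (- lam * t).
have E_gt0 : 0 < E by exact: expR_gt0.
have tT : 0 < t < T by solve_itv.
have p_oo : box_oo T Rad K t x l by do 2?split; solve_itv.
have p_cc : box_cc T Rad K t x l.
  by case: p_oo => /andP[? ?] [/andP[? ?] /andP[? ?]]; do 2?split; solve_itv.
have [Wx Wxx] : E * (vx i t x l - ux i t x l) - eps * (2 * x) = 0 /\
                E * (vxx i t x l - uxx i t x l) - eps * 2 <= 0.
  apply: (has_deriv_within_interior_max (g := fun y => z i t y l)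
    (g1 := fun y => E * (vx i t y l - ux i t y l) - eps * (2 * y)) xR).
  - move=> y /andP[y_gt0 yR].
    have q_in : box_ccco T Rad K t y l by do 2?split; solve_itv.
    apply: has_deriv_within_subset (penalized_gap_deriv_x
      (C120_deriv_x v_C120 iI q_in) (C120_deriv_x u_C120 iI q_in)).
    by move=> z /andP[? ?]; solve_itv.
  - exact: penalized_gap_deriv_xx (C120_deriv_xx v_C120 iI p_oo) (C120_deriv_xx u_C120 iI p_oo).
  - by move=> y /andP[? ?]; apply: gmax => //; solve_itv.
have Wt : 0 <= E * (vt i t x l - ut i t x l - lam * (v i t x l - u i t x l)).
  apply: (has_deriv_within_ge0_at_left_max t_gt0) (penalized_gap_deriv_t tT
    (C120_deriv_t v_C120 iI p_oo) (C120_deriv_t u_C120 iI p_oo)) => s /andP[s_gt0 st].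
    by solve_itv.
  by apply: gmax => //; solve_itv.
have pde : E * ((vt i t x l - a i t x l * vxx i t x l + b i t x l * vx i t x l
                 + c i t x l * v i t x l - f i t x l)
              - (ut i t x l - a i t x l * uxx i t x l + b i t x l * ux i t x l
                 + c i t x l * u i t x l - f i t x l)) <= 0.
  by rewrite pmulr_rle0 // subr_le0; exact: le_trans (v_sub iI p_oo) (u_super iI p_oo).
apply: (interior_max_inconsistent (W := E * (v i t x l - u i t x l))
  (Wt := E * (vt i t x l - ut i t x l)) (Wx := E * (vx i t x l - ux i t x l))
  (Wxx := E * (vxx i t x l - uxx i t x l)) (A := a i t x l) (B := b i t x l)
  (C := c i t x l) (lam := lam) (eps := eps) (x := x) (Rad := Rad)).
- by move: pde; congr (_ <= _); ring.
- by move: Wt; lra.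
- by lra.
- by lra.
- by case/andP: xR => ? ?; solve_itv.
- by rewrite eps_gt0 (eps_lt_weighted_gap (ltW lK) gap_pos).
- exact: a_ge0 iI p_cc.
- exact: lam_large iI p_cc.
Qed.

Lemma gap_max_le0 (t0 l0 : R) i t x l : (i < I)%N -> t0 < T -> 0 < l0 ->
  0 <= t <= t0 -> 0 <= x <= Rad -> l0 <= l <= K ->
  gap_max_at t0 l0 i t x l -> z i t x l <= 0.
Proof.
move=> iI t0T l0_gt0 /andP[t_ge0 tt0] /andP[x_ge0 xR] /andP[l0l lK] gmax.
have [t0_eq|t_neq0] := eqVneq t 0.
  by apply: (penalized_gap_le0_of_le lK); rewrite t0_eq; apply: vu_initial => //; solve_itv.
have [lK_eq|l_neqK] := eqVneq l K.
  have T_ge0 : 0 <= T := ltW T_gt0.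
  by apply: (penalized_gap_le0_of_le lK); rewrite lK_eq; apply: vu_terminal => //; solve_itv.
have t_gt0 : 0 < t by rewrite lt_neqAle eq_sym t_neq0.
have l_lt : l0 <= l < K by rewrite l0l lt_neqAle l_neqK.
have t_in : 0 < t <= t0 by rewrite t_gt0.
have [x0|x_neq0] := eqVneq x 0.
  have tl_cc : rect_cc T K t l by split; solve_itv.
  rewrite x0 in gmax *; rewrite (penalized_gap_junction iI tl_cc).
  apply: gap_max_junction_le0 t0T l0_gt0 t_in l_lt _.
  move=> j s y m jI s_in y_in m_in; rewrite -(penalized_gap_junction iI tl_cc).
  exact: gmax j s y m jI s_in y_in m_in.
have [xR_eq|x_neqR] := eqVneq x Rad.
  by move: gmax; rewrite xR_eq => /(gap_max_not_neumann iI t0T l0_gt0 t_in l_lt).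
have x_in : 0 < x < Rad by rewrite !lt_neqAle eq_sym x_neq0 x_neqR x_ge0 xR.
exact: gap_max_interior_le0 iI t0T l0_gt0 t_in x_in l_lt gmax.
Qed.

Lemma penalized_gap_le0 (t0 l0 : R) : 0 < t0 < T -> 0 < l0 < K ->
  forall i t x l, (i < I)%N -> 0 <= t <= t0 -> 0 <= x <= Rad -> l0 <= l <= K -> z i t x l <= 0.
Proof.
move=> /andP[t0_gt0 t0T] /andP[l0_gt0 l0K].
have box_sub p : cbox 0 t0 0 Rad l0 K p -> box_cc T Rad K p.1.1 p.1.2 p.2.
  by case=> /andP[? ?] ? /andP[? ?]; do 2?split => //; solve_itv.
have [j [[[t x] l] [jI [t_in x_in l_in] jmax]]] : exists j p, [/\ (j < I)%N,
    cbox 0 t0 0 Rad l0 K p & forall i q, (i < I)%N -> cbox 0 t0 0 Rad l0 K q ->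
      unc3 (z i) q <= unc3 (z j) p].
  apply: finite_argmax I_gt0 _ => i iI.
  apply: continuous_max_cbox; [exact: ltW | exact: ltW | exact: ltW |].
  exact: (continuous_penalized (cont_on3_within box_sub (C120_cont v_C120 iI))
    (cont_on3_within box_sub (C120_cont u_C120 iI))).
have gmax : gap_max_at t0 l0 j t x l.
  by move=> i s y m iI s_in y_in m_in; exact: jmax i ((s, y), m) iI (And3 s_in y_in m_in).
move=> i s y m iI s_in y_in m_in.
have zj_le0 := gap_max_le0 jI t0T l0_gt0 t_in x_in l_in gmax.
exact: le_trans (gmax i s y m iI s_in y_in m_in) zj_le0.
Qed.

End Penalization.

Lemma comparison_interior i t x l : (i < I)%N -> 0 < t < T -> 0 <= x <= Rad -> 0 < l < K ->
  v i t x l <= u i t x l.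
Proof.
move=> iI tT x_in /andP[l_gt0 lK].
have chi_gt0 : 0 < K + 1 - l + x ^+ 2 by move: (sqr_ge0 x); lra.
have : expR (- lam * t) * (v i t x l - u i t x l) <= 0.
  apply/ler_addgt0Pr => e e_gt0; rewrite add0r.
  have eps_gt0 : 0 < e / (K + 1 - l + x ^+ 2) by rewrite divr_gt0.
  have l_in : 0 < l < K by rewrite l_gt0.
  have t_in : 0 <= t <= t by rewrite lexx; case/andP: tT => /ltW ->.
  have l_mem : l <= l <= K by rewrite lexx ltW.
  have := penalized_gap_le0 eps_gt0 tT l_in iI t_in x_in l_mem.
  by rewrite /penalized_gap divfK ?gt_eqF //; lra.
by rewrite pmulr_rle0 ?expR_gt0 // subr_le0.
Qed.

End Comparison.

Lemma coefficients_dominated (R : realType) (I : nat) (T Rad K : R)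
    (a b c : nat -> R -> R -> R -> R) : 0 <= T -> 0 <= Rad -> 0 <= K ->
    (forall i, (i < I)%N -> [/\ lipschitz3 (box_cc T Rad K) (a i),
       lipschitz3 (box_cc T Rad K) (b i) & lipschitz3 (box_cc T Rad K) (c i)]) ->
  exists lam, forall i t x l, (i < I)%N -> box_cc T Rad K t x l ->
    2 * a i t x l + 2 * Rad * `|b i t x l| + `|c i t x l| < lam.
Proof.
move=> T_ge0 Rad_ge0 K_ge0 lip.
have bounded (h : nat -> R -> R -> R -> R) :
    (forall i, (i < I)%N -> lipschitz3 (box_cc T Rad K) (h i)) ->
    exists C, forall i t x l, (i < I)%N -> box_cc T Rad K t x l -> `|h i t x l| <= C.
  by move=> h_lip; apply: bounded_family => i iI; exact: lipschitz3_box_bounded (h_lip i iI).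
have [Ca Ca_bd] := bounded a (fun i iI => let: And3 h _ _ := lip i iI in h).
have [Cb Cb_bd] := bounded b (fun i iI => let: And3 _ h _ := lip i iI in h).
have [Cc Cc_bd] := bounded c (fun i iI => let: And3 _ _ h := lip i iI in h).
exists (2 * Ca + 2 * Rad * Cb + Cc + 1) => i t x l iI p_in.
have b_bd := ler_wpM2l Rad_ge0 (Cb_bd i t x l iI p_in).
by move: (Ca_bd i t x l iI p_in) (Cc_bd i t x l iI p_in) (ler_norm (a i t x l)); lra.
Qed.

Theorem theorem2p6 (R : realType) (I : nat) (T Rad K : R)
    (a b c f : nat -> R -> R -> R -> R) (alpha : nat -> R -> R -> R)
    (r phi : R -> R -> R) (psi g : nat -> R -> R -> R) (abar alphabar : R)
    (u ut ux uxx : nat -> R -> R -> R -> R) (ul : R -> R -> R)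
    (v vt vx vxx : nat -> R -> R -> R -> R) (vl : R -> R -> R) :
  0 < T -> 0 < Rad -> 0 < K -> (2 <= I)%N ->
  data_assump I T Rad K a b c f alpha r phi psi g abar alphabar ->
  C120 I T Rad K u ut ux uxx ul ->
  C120 I T Rad K v vt vx vxx vl ->
  (* u super solution *)
  (forall i t x l, (i < I)%N -> box_oo T Rad K t x l ->
     0 <= ut i t x l - a i t x l * uxx i t x l + b i t x l * ux i t x l
          + c i t x l * u i t x l - f i t x l) ->
  (forall t l, itv_oo 0 T t -> itv_oo 0 K l ->
     ul t l + \sum_(i < I) alpha i t l * ux i t 0 l - r t l * u 0%N t 0 l - phi t l <= 0) ->
  (forall i t l, (i < I)%N -> itv_oo 0 T t -> itv_oo 0 K l -> 0 <= ux i t Rad l) ->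
  (* v sub solution *)
  (forall i t x l, (i < I)%N -> box_oo T Rad K t x l ->
     vt i t x l - a i t x l * vxx i t x l + b i t x l * vx i t x l
          + c i t x l * v i t x l - f i t x l <= 0) ->
  (forall t l, itv_oo 0 T t -> itv_oo 0 K l ->
     0 <= vl t l + \sum_(i < I) alpha i t l * vx i t 0 l - r t l * v 0%N t 0 l - phi t l) ->
  (forall i t l, (i < I)%N -> itv_oo 0 T t -> itv_oo 0 K l -> vx i t Rad l <= 0) ->
  (* initial and terminal (l = K) ordering *)
  (forall i x l, (i < I)%N -> itv_cc 0 Rad x -> itv_cc 0 K l -> v i 0 x l <= u i 0 x l) ->
  (forall i t x, (i < I)%N -> itv_cc 0 T t -> itv_cc 0 Rad x -> v i t x K <= u i t x K) ->
  forall i t x l, (i < I)%N -> box_cc T Rad K t x l -> v i t x l <= u i t x l.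
Proof.
move=> T_gt0 Rad_gt0 K_gt0 I2 [lip [_ [_ [[abar_gt0 a_ge_abar] [_ [alpha_ge0 [r_ge0 _]]]]]]]
  u_C120 v_C120 u_super u_junction u_neumann v_sub v_junction v_neumann vu_initial vu_terminal.
have I_gt0 : (0 < I)%N by apply: leq_trans I2.
have a_ge0 i t x l : (i < I)%N -> box_cc T Rad K t x l -> 0 <= a i t x l.
  by move=> iI p_in; exact: le_trans (ltW abar_gt0) (a_ge_abar i t x l iI p_in).
have [lam lam_large] := coefficients_dominated (ltW T_gt0) (ltW Rad_gt0) (ltW K_gt0)
  (fun i iI => let: And4 la lb lc _ := lip i iI in And3 la lb lc).
move=> i t x l iI.
apply: (cont_on3_le_from_interior T_gt0 K_gt0 (C120_cont u_C120 iI) (C120_cont v_C120 iI)).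
move=> s y m; exact: (comparison_interior I_gt0 T_gt0 Rad_gt0 u_C120 v_C120 a_ge0 alpha_ge0 r_ge0
  u_super u_junction u_neumann v_sub v_junction v_neumann vu_initial vu_terminal lam_large iI).
Qed.
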